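(* Let $P,Q,R$ be distributions and let $\alpha\in(1/\sqrt{2},1)$. If $$\mathrm{H}(Q,R)\geq \frac{\sqrt{2}}{\sqrt{2}\alpha-1}\,\mathrm{H}(P,R),$$ then for every $n\geq 1$, with $X_1,\dots,X_n$ i.i.d. from $R$, $$\mathbb{E}\big[\mathrm{T}(P,Q,X^n)\big]\geq 2(1-\alpha^2)\,\mathrm{H}^2(Q,R).$$
   Context: Distributions $P,Q,R$ are probability distributions on a measurable space $\mathcal{X}$, identified with their densities with respect to a common $\sigma$-finite reference measure $\mu$ (e.g. Lebesgue measure, or counting measure in the discrete case). All integrals and norms are taken with respect to $\mu$, with $\|U\|_p = (\int |U|^p\, d\mu)^{1/p}$. The Hellinger distance is $\mathrm{H}(P,Q) = \frac{1}{\sqrt{2}}\|\sqrt{P}-\sqrt{Q}\|_2$. For a sample $X^n=(X_1,\dots,X_n)$, the test statistic is $$\mathrm{T}(P,Q,X^n) = \frac{1}{n}\sum_{i=1}^n \frac{P(X_i)-Q(X_i)}{P(X_i)+Q(X_i)},$$ where a summand is interpreted as $0$ whenever $P(X_i)+Q(X_i)=0$. *)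

From HB Require Import structures.
From mathcomp Require Import all_boot all_order all_algebra.
From mathcomp Require Import all_classical all_reals all_analysis.
Set Implicit Arguments. Unset Strict Implicit. Unset Printing Implicit Defensive.
Import Order.TTheory GRing.Theory Num.Theory.
Local Open Scope classical_set_scope.
Local Open Scope ring_scope.

Definition is_density {d} {T : measurableType d} {R : realType}
  (mu : {measure set T -> \bar R}) (P : T -> R) : Prop :=
  [/\ measurable_fun setT P, (forall x, 0 <= P x)
    & (\int[mu]_x (P x)%:E = 1)%E].

Definition hellinger2 {d} {T : measurableType d} {R : realType}
  (mu : {measure set T -> \bar R}) (P Q : T -> R) : R :=
  2^-1 * fine (\int[mu]_x ((Num.sqrt (P x) - Num.sqrt (Q x)) ^+ 2)%:E).

Definition hellinger {d} {T : measurableType d} {R : realType}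
  (mu : {measure set T -> \bar R}) (P Q : T -> R) : R :=
  Num.sqrt (hellinger2 mu P Q).

Definition tsummand {T : Type} {R : realType} (P Q : T -> R) (x : T) : R :=
  if P x + Q x == 0 then 0 else (P x - Q x) / (P x + Q x).

Definition test_stat {T : Type} {R : realType} (P Q : T -> R) (n : nat)
  (xs : 'I_n -> T) : R :=
  n%:R^-1 * \sum_(i < n) tsummand P Q (xs i).

Definition iid_with_density {d d'} {T : measurableType d}
  {Omega : measurableType d'} {R : realType}
  (Pr : probability Omega R) (mu : {measure set T -> \bar R}) (Rd : T -> R)
  (n : nat) (X : 'I_n -> Omega -> T) : Prop :=
  [/\ (forall i, measurable_fun setT (X i)),
      (forall i (A : set T), measurable A ->
         Pr (X i @^-1` A) = (\int[mu]_(x in A) (Rd x)%:E)%E)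
    & (forall A : 'I_n -> set T, (forall i, measurable (A i)) ->
         Pr (\bigcap_(i in [set: 'I_n]) (X i @^-1` A i))
         = (\prod_(i < n) Pr (X i @^-1` A i))%E)].

From HB Require Import structures.
From mathcomp Require Import all_boot all_order all_algebra.
From mathcomp Require Import all_classical all_reals all_analysis.
From mathcomp Require Import measurable_realfun.
From mathcomp Require Import ring lra.
Import Order.TTheory GRing.Theory Num.Theory.
Local Open Scope classical_set_scope.
Local Open Scope ring_scope.
Set Implicit Arguments. Unset Strict Implicit. Unset Printing Implicit Defensive.

(* Write t(x) = (P - Q)/(P + Q) for the summand and p, q, r for the square
   roots of P, Q, R at x.  The proof has three parts.
   1. Pointwise algebra: t r^2 >= (p^2 - q^2)/2 + (r - q)^2/2 - (r - p)^2
      - |(r - p)(r - q)|, a polynomial inequality proved by cases on the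
      order of p, q, r; the weighted AM-GM inequality then splits the last
      term with an arbitrary weight beta > 0.
   2. Integration: since int P = int Q = 1 this gives
      int (t + 1) R dmu >= 1 + (1 - beta) H^2(Q,R) - (2 + 1/beta) H^2(P,R)
      (the shift by R keeps every integrand nonnegative).  Integrals against
      the law of X_i are integrals against R dmu, and by linearity of
      expectation E[T] + 1 = int (t + 1) R dmu. Constants: for beta = alpha - 1/sqrt 2 the hypothesis reads
      H(P,R) <= beta H(Q,R), and 1 - 2 beta - 2 beta^2 >= 2 (1 - alpha^2). *)

(* contrast_gap p q r sg is the slack of the pointwise inequality of step 1,
   multiplied by 2 (p^2 + q^2), where sg is the sign of (r - p)(r - q). *)
Section contrast_algebra.
Variable R : realFieldType.
Implicit Types a b c p q r : R.

Definition contrast_gap p q r (sg : R) : R :=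
  2 * (p^+2 - q^+2) * r^+2
  - (p^+2 + q^+2) * ((p^+2 - q^+2) + (r - q)^+2 - 2 * (r - p)^+2
                      - 2 * (sg * ((r - p) * (r - q)))).

(* For a <= b <= c the slack is a polynomial in a, b - a, c - b with
   nonnegative coefficients, for each of the six orders of p, q, r. *)
Lemma contrast_gap_sorted a b c : 0 <= a -> a <= b -> b <= c ->
  [/\ 0 <= contrast_gap a b c 1, 0 <= contrast_gap b a c 1,
       0 <= contrast_gap b c a 1 & 0 <= contrast_gap c b a 1]
  /\ (0 <= contrast_gap a c b (-1) /\ 0 <= contrast_gap c a b (-1)).
Proof.
move=> a0 ab bc.
have x0 : 0 <= b - a by rewrite subr_ge0.
have y0 : 0 <= c - b by rewrite subr_ge0.
have := mulr_ge0 a0 a0; have := mulr_ge0 a0 x0; have := mulr_ge0 a0 y0.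
have := mulr_ge0 x0 x0; have := mulr_ge0 x0 y0; have := mulr_ge0 y0 y0.
rewrite /contrast_gap => *; do !split; nra.
Qed.

Lemma contrast_poly_ineq p q r : 0 <= p -> 0 <= q -> 0 <= r ->
  (p^+2 + q^+2) * ((p^+2 - q^+2) + (r - q)^+2 - 2 * (r - p)^+2
                   - 2 * `|(r - p) * (r - q)|) <= 2 * (p^+2 - q^+2) * r^+2.
Proof.
move=> p0 q0 r0.
set E := (r - p) * (r - q).
suff [sg [sgE gap0]] : exists sg, sg * E = `|E| /\ 0 <= contrast_gap p q r sg.
  by rewrite -subr_ge0 -sgE.
have outer : 0 <= E -> 0 <= contrast_gap p q r 1 ->
    exists sg, sg * E = `|E| /\ 0 <= contrast_gap p q r sg.
  by exists 1; rewrite mul1r ger0_norm.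
have inner : E <= 0 -> 0 <= contrast_gap p q r (-1) ->
    exists sg, sg * E = `|E| /\ 0 <= contrast_gap p q r sg.
  by exists (-1); rewrite mulN1r ler0_norm.
have [pq|qp] := leP p q; have [qr|rq] := leP q r; have [pr|rp] := leP p r;
  try lra.
- have [[? ? ? ?] _] := contrast_gap_sorted p0 pq qr.
  by apply: outer => //; rewrite /E; nra.
- have [_ [? ?]] := contrast_gap_sorted p0 pr (ltW rq).
  by apply: inner => //; rewrite /E; nra.
- have [[? ? ? ?] _] := contrast_gap_sorted r0 (ltW rp) pq.
  by apply: outer => //; rewrite /E; nra.
- have [[? ? ? ?] _] := contrast_gap_sorted q0 (ltW qp) pr.
  by apply: outer => //; rewrite /E; nra.
- have [_ [? ?]] := contrast_gap_sorted q0 qr (ltW rp).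
  by apply: inner => //; rewrite /E; nra.
- have [[? ? ? ?] _] := contrast_gap_sorted r0 (ltW rq) (ltW qp).
  by apply: outer => //; rewrite /E; nra.
Qed.

End contrast_algebra.

Definition contrast (R : realFieldType) (a b : R) : R :=
  if a + b == 0 then 0 else (a - b) / (a + b).

Lemma tsummandE (T : Type) (R : realType) (P Q : T -> R) x :
  tsummand P Q x = contrast (P x) (Q x).
Proof. by []. Qed.

Section contrast_pointwise.
Variable R : rcfType.
Implicit Types a b c : R.

Lemma contrast_bounds a b : 0 <= a -> 0 <= b -> -1 <= contrast a b <= 1.
Proof.
move=> a0 b0; rewrite /contrast; case: ifPn => [_|ab0]; first by lra.
have ab : 0 < a + b by rewrite lt0r ab0 addr_ge0.
by rewrite ler_pdivlMr// ler_pdivrMr//; lra.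
Qed.

Lemma contrast_lower a b c : 0 <= a -> 0 <= b -> 0 <= c ->
  (a - b) / 2 + (Num.sqrt c - Num.sqrt b)^+2 / 2 - (Num.sqrt c - Num.sqrt a)^+2
    - `|(Num.sqrt c - Num.sqrt a) * (Num.sqrt c - Num.sqrt b)|
  <= contrast a b * c.
Proof.
move=> a0 b0 c0; rewrite /contrast.
have := contrast_poly_ineq (sqrtr_ge0 a) (sqrtr_ge0 b) (sqrtr_ge0 c).
rewrite !sqr_sqrtr//; case: ifPn => [/eqP ab0 _|ab0 ineq].
  have [-> ->] : a = 0 /\ b = 0 by lra.
  rewrite sqrtr0 !subr0.
  have := sqr_ge0 (Num.sqrt c); have := normr_ge0 (Num.sqrt c * Num.sqrt c).
  lra.
have ab : 0 < a + b by rewrite lt0r ab0 addr_ge0.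
rewrite [_ / _ * c]mulrAC ler_pdivlMr//; lra.
Qed.

Lemma norm_mul_le_amgm (beta x y : R) : 0 < beta ->
  `|x * y| <= (beta^-1 * x^+2 + beta * y^+2) / 2.
Proof.
move=> beta0; rewrite normrM.
rewrite -[x^+2]real_normK ?num_real// -[y^+2]real_normK ?num_real// -subr_ge0.
have -> : (beta^-1 * `|x|^+2 + beta * `|y|^+2) / 2 - `|x| * `|y| =
    (`|x| - beta * `|y|)^+2 / (2 * beta) by field; rewrite gt_eqF.
by rewrite divr_ge0 ?sqr_ge0// mulr_ge0// ltW.
Qed.

(* The pointwise inequality that is integrated: every term is nonnegative,
   so it can be integrated without any integrability condition. *)
Lemma contrast_pointwise (beta a b c : R) : 0 < beta ->
  0 <= a -> 0 <= b -> 0 <= c ->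
  (Num.sqrt b - Num.sqrt c)^+2 / 2 + a / 2 + c <=
  (contrast a b + 1) * c + b / 2
  + (1 + beta^-1 / 2) * (Num.sqrt a - Num.sqrt c)^+2
  + beta / 2 * (Num.sqrt b - Num.sqrt c)^+2.
Proof.
move=> beta0 a0 b0 c0.
have := contrast_lower a0 b0 c0.
have := norm_mul_le_amgm (Num.sqrt c - Num.sqrt a) (Num.sqrt c - Num.sqrt b) beta0.
have sym (x y : R) : (x - y)^+2 = (y - x)^+2 by ring.
by rewrite (sym (Num.sqrt a)) (sym (Num.sqrt b)); lra.
Qed.

End contrast_pointwise.

Section sqrt2_constants.
Variable R : rcfType.

Lemma sqrt2_ratio (alpha : R) :
  Num.sqrt 2 / (Num.sqrt 2 * alpha - 1) = (alpha - (Num.sqrt 2)^-1)^-1.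
Proof.
have s0 : Num.sqrt (2 : R) != 0 by rewrite gt_eqF// sqrtr_gt0.
rewrite (_ : _ * alpha - 1 = Num.sqrt 2 * (alpha - (Num.sqrt 2)^-1)).
  by rewrite invfM mulrA divff// mul1r.
by rewrite mulrBr divff.
Qed.

(* With beta = alpha - 1/sqrt 2 the bound of step 2 has constant
   1 - 2 beta - 2 beta^2, which dominates 2 (1 - alpha^2). *)
Lemma sqrt2_constant (alpha : R) : (Num.sqrt 2)^-1 <= alpha ->
  2 * (1 - alpha ^+ 2) <=
  1 - 2 * (alpha - (Num.sqrt 2)^-1) - 2 * (alpha - (Num.sqrt 2)^-1) ^+ 2.
Proof.
set s := Num.sqrt (2 : R).
have s2 : s ^+ 2 = 2 by rewrite sqr_sqrtr.
have s1 : 1 <= s by rewrite -(sqrtr1 R) ler_sqrt// ler1n.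
have s0 : 0 < s by rewrite sqrtr_gt0.
have sinv : s^-1 = s / 2.
  by rewrite -[in RHS]s2 expr2 invfM mulrA divff ?mul1r ?gt_eqF.
rewrite sinv => alpha_ge.
have : 0 <= (s - 1) * (alpha - s / 2) by rewrite mulr_ge0// subr_ge0.
nra.
Qed.

End sqrt2_constants.

Section test_statistic.
Context (T : Type) (R : realType) (P Q : T -> R).
Hypotheses (P0 : forall x, 0 <= P x) (Q0 : forall x, 0 <= Q x).

Lemma tsummand_bounds x : -1 <= tsummand P Q x <= 1.
Proof. by rewrite tsummandE contrast_bounds. Qed.

Lemma test_stat_bounded n (xs : 'I_n -> T) : `|test_stat P Q xs| <= 1.
Proof.
rewrite /test_stat normrM ger0_norm ?invr_ge0//.
case: n xs => [|n] xs; first by rewrite big_ord0 normr0 mulr0.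
rewrite ler_pdivrMl ?ltr0Sn// mulr1.
apply: (le_trans (ler_norm_sum _ _ _)).
have -> : n.+1%:R = \sum_(i < n.+1) (1 : R) by rewrite sumr_const card_ord.
by apply: ler_sum => i _; rewrite ler_norml tsummand_bounds.
Qed.

(* Shifting by 1 makes every summand nonnegative. *)
Lemma test_stat_shiftE n (xs : 'I_n -> T) : (0 < n)%N ->
  test_stat P Q xs + 1 = n%:R^-1 * \sum_(i < n) (tsummand P Q (xs i) + 1).
Proof.
move=> n0; rewrite /test_stat big_split/= sumr_const card_ord mulrDr.
by rewrite mulVf// pnatr_eq0 -lt0n.
Qed.

End test_statistic.

Section measurability.
Context d (T : measurableType d) (R : realType).

Lemma measurable_inv : measurable_fun setT (@GRing.inv R).
Proof.
have -> : @GRing.inv R = fun x => if x == 0 then 0 else x^-1.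
  by apply/funext => x; case: eqP => // ->; rewrite invr0.
apply: measurable_fun_if => //.
  by apply: measurable_fun_eqr => //; exact: measurable_cst.
rewrite setTI (_ : _ @^-1` _ = [set x | x != 0]); last first.
  by apply/seteqP; split => x /=; case: eqP.
apply: open_continuous_measurable_fun; first exact: open_neq.
by move=> x /[!inE] x0; exact: inv_continuous.
Qed.

Lemma measurable_comb (f g : T -> R) (a b : R) :
  measurable_fun setT f -> measurable_fun setT g ->
  measurable_fun setT (fun x => a * f x + b * g x).
Proof. by move=> mf mg; apply: measurable_funD; exact: measurable_funM. Qed.

Lemma measurable_sqrt_diff2 (f g : T -> R) :
  measurable_fun setT f -> measurable_fun setT g ->
  measurable_fun setT (fun x => (Num.sqrt (f x) - Num.sqrt (g x))^+2).
Proof.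
have msqrt : measurable_fun setT (@Num.sqrt R).
  by apply: continuous_measurable_fun; exact: sqrt_continuous.
by move=> mf mg; apply/measurable_funX/measurable_funB; exact: measurableT_comp.
Qed.

Lemma measurable_tsummand (P Q : T -> R) :
  measurable_fun setT P -> measurable_fun setT Q ->
  measurable_fun setT (tsummand P Q).
Proof.
move=> mP mQ; apply: measurable_fun_ifT.
- by apply: measurable_fun_eqr; [exact: measurable_funD | exact: measurable_cst].
- exact: measurable_cst.
- apply: measurable_funM; first exact: measurable_funB.
  by apply: measurableT_comp; [exact: measurable_inv | exact: measurable_funD].
Qed.

End measurability.

Section integral_density.
Context d (T : measurableType d) (R : realType).
Variables (mu nu : {measure set T -> \bar R}) (g : T -> R).
Hypotheses (g_ge0 : forall x, 0 <= g x) (mg : measurable_fun setT g)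
  (nuE : forall A, measurable A -> nu A = (\int[mu]_(x in A) (g x)%:E)%E).
Local Open Scope ereal_scope.
Import HBNNSimple.

Let mEg : measurable_fun setT (EFin \o g).
Proof. exact/measurable_EFinP. Qed.

(* For simple h, both sides are sums over the values y of h of
   y * int_(h = y) g dmu = y * nu (h = y). *)
Lemma integral_density_nnsfun (h : {nnsfun T >-> R}) :
  \int[mu]_x ((h x)%:E * (g x)%:E) = \int[nu]_x (h x)%:E.
Proof.
have hA_ge0 y x : 0 <= (y * \1_(h @^-1` [set y]) x)%:E := nnfun_muleindic_ge0 h y x.
have mhA y : measurable_fun setT (fun x => (y * \1_(h @^-1` [set y]) x)%:E).
  by apply/measurable_EFinP; exact: measurable_funM.
rewrite integralT_nnsfun sintegralE.
under eq_integral => x _.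
  rewrite (fimfunE h x) -fsumEFin// ge0_mule_fsuml//; over.
rewrite ge0_integral_fsum//; last 2 first.
- by move=> y; exact: emeasurable_funM.
- by move=> y x _; apply: mule_ge0 => //; rewrite lee_fin.
apply: eq_fsbigr => _ /[!inE] -[x _ <-].
under eq_integral do rewrite EFinM -muleA.
rewrite ge0_integralZl_EFin//; last 2 first.
- by move=> t _; rewrite mule_ge0 ?lee_fin.
- by apply: emeasurable_funM => //; apply/measurable_EFinP; exact: measurable_indic.
rewrite nuE// [X in _ = _ * X]integral_mkcond epatch_indic.
by congr (_ * _); apply: eq_integral => t _; rewrite muleC.
Qed.

Lemma integral_density (f : T -> \bar R) :
  (forall x, 0 <= f x) -> measurable_fun setT f ->
  \int[mu]_x (f x * (g x)%:E) = \int[nu]_x f x.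
Proof.
move=> f_ge0 mf; pose h := nnsfun_approx measurableT mf.
have cvg_h x := cvg_nnsfun_approx measurableT mf (fun t _ => f_ge0 t) (I : setT x).
have fE x : f x = limn (fun n => (h n x)%:E) by rewrite (cvg_lim _ (cvg_h x)).
have h_nd x : {homo (fun n => (h n x)%:E) : m n / (m <= n)%N >-> m <= n}.
  by move=> m n mn; rewrite lee_fin; exact/lefP/nd_nnsfun_approx.
have mh n : measurable_fun setT (fun x => (h n x)%:E).
  by apply/measurable_EFinP; exact: measurable_funPT.
transitivity (limn (fun n => \int[mu]_x ((h n x)%:E * (g x)%:E))).
  rewrite -monotone_convergence//; last 3 first.
  - by move=> n; exact: emeasurable_funM.
  - by move=> n x _; rewrite mule_ge0 ?lee_fin.
  - by move=> x _ m n mn; rewrite lee_wpmul2r ?lee_fin//; exact: h_nd.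
  apply: eq_integral => x _; rewrite fE; apply/esym/cvg_lim => //.
  by rewrite -fE; apply: cvgeZr => //; exact: cvg_h.
under [RHS]eq_integral do rewrite fE.
rewrite monotone_convergence//; last by move=> n x _; rewrite lee_fin.
by congr (limn _); apply/funext => n; exact: integral_density_nnsfun.
Qed.
End integral_density.

Lemma integral_law_density d (T : measurableType d) (R : realType)
  (mu : {measure set T -> \bar R}) (Rd : T -> R)
  d' (Omega : measurableType d') (Pr : probability Omega R) (Y : Omega -> T) :
  (forall x, 0 <= Rd x) -> measurable_fun setT Rd -> measurable_fun setT Y ->
  (forall A, measurable A -> Pr (Y @^-1` A) = (\int[mu]_(x in A) (Rd x)%:E)%E) ->
  forall f : T -> \bar R, (forall x, (0 <= f x)%E) -> measurable_fun setT f ->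
  (\int[Pr]_w f (Y w) = \int[mu]_x (f x * (Rd x)%:E))%E.
Proof.
move=> R0 mR mY YA f f0 mf.
pose Yrv : {mfun Omega >-> T} := HB.pack Y (isMeasurableFun.Build _ _ _ _ Y mY).
rewrite -(@ge0_integral_distribution _ _ _ _ _ Pr Yrv f mf f0).
by rewrite (@integral_density _ _ _ mu (distribution Pr Yrv) Rd R0 mR YA).
Qed.

Section hellinger_integrals.
Context d (T : measurableType d) (R : realType).
Variable mu : {measure set T -> \bar R}.
Local Open Scope ereal_scope.

Lemma ge0_integral_comb (f g : T -> R) (a b : R) : (0 <= a)%R -> (0 <= b)%R ->
  (forall x, 0 <= f x)%R -> (forall x, 0 <= g x)%R ->
  measurable_fun setT f -> measurable_fun setT g ->
  \int[mu]_x ((a * f x + b * g x)%:E) =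
  a%:E * \int[mu]_x (f x)%:E + b%:E * \int[mu]_x (g x)%:E.
Proof.
move=> a0 b0 f0 g0 mf mg.
have mZ c (h : T -> R) : measurable_fun setT h ->
    measurable_fun setT (fun x => c%:E * (h x)%:E).
  by move=> mh; apply/measurable_EFinP; exact: measurable_funM.
under eq_integral do rewrite EFinD !EFinM.
rewrite ge0_integralD//; last 4 first.
- by move=> x _; rewrite -EFinM lee_fin mulr_ge0.
- exact: mZ.
- by move=> x _; rewrite -EFinM lee_fin mulr_ge0.
- exact: mZ.
rewrite !ge0_integralZl_EFin//.
- by move=> x _; rewrite lee_fin.
- exact/measurable_EFinP.
- by move=> x _; rewrite lee_fin.
- exact/measurable_EFinP.
Qed.

Lemma hellinger2_ge0 (P Q : T -> R) : (0 <= hellinger2 mu P Q)%R.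
Proof.
rewrite /hellinger2 mulr_ge0// fine_ge0// integral_ge0// => x _.
by rewrite lee_fin sqr_ge0.
Qed.

Lemma hellinger2_le (P Q Rd : T -> R) (beta : R) : (0 < beta)%R ->
  (beta^-1 * hellinger mu P Rd <= hellinger mu Q Rd)%R ->
  (hellinger2 mu P Rd <= beta ^+ 2 * hellinger2 mu Q Rd)%R.
Proof.
rewrite /hellinger => beta0; rewrite mulrC ler_pdivrMr// => hPQ.
rewrite -(sqr_sqrtr (hellinger2_ge0 P Rd)) -(sqr_sqrtr (hellinger2_ge0 Q Rd)).
rewrite -exprMn; have := sqrtr_ge0 (hellinger2 mu P Rd); nra.
Qed.

(* For densities the Hellinger integral is at most 2, hence finite, so the
   definition of hellinger2 through fine loses nothing. *)
Lemma integral_hellinger2 (P Q : T -> R) : is_density mu P -> is_density mu Q ->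
  \int[mu]_x (((Num.sqrt (P x) - Num.sqrt (Q x)) ^+ 2)%:E) =
  (2 * hellinger2 mu P Q)%:E.
Proof.
move=> [mP P0 IP] [mQ Q0 IQ].
set I := \int[mu]_x _.
have I0 : 0 <= I by apply: integral_ge0 => x _; rewrite lee_fin sqr_ge0.
have I2 : I <= 2%:E.
  rewrite (_ : 2%:E = \int[mu]_x ((1 * P x + 1 * Q x)%:E)); last first.
    by rewrite ge0_integral_comb// IP IQ !mul1e.
  apply: ge0_le_integral => //.
  - by move=> x _; rewrite lee_fin sqr_ge0.
  - by apply/measurable_EFinP; exact: measurable_sqrt_diff2.
  - by apply/measurable_EFinP; exact: measurable_comb.
  - move=> x _; rewrite lee_fin !mul1r.
    have := sqr_sqrtr (P0 x); have := sqr_sqrtr (Q0 x).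
    have := sqrtr_ge0 (P x); have := sqrtr_ge0 (Q x); nra.
have If : I \is a fin_num by rewrite ge0_fin_numE// (le_lt_trans I2) ?ltry.
by rewrite /hellinger2 -/I mulrA divff ?mul1r ?fineK.
Qed.

End hellinger_integrals.

Section contrast_integral.
Context d (T : measurableType d) (R : realType).
Variables (mu : {measure set T -> \bar R}) (P Q Rd : T -> R).
Hypotheses (dP : is_density mu P) (dQ : is_density mu Q) (dR : is_density mu Rd).
Local Open Scope ereal_scope.

Let u x := ((Num.sqrt (P x) - Num.sqrt (Rd x))^+2)%R.
Let v x := ((Num.sqrt (Q x) - Num.sqrt (Rd x))^+2)%R.
Let psi x := ((tsummand P Q x + 1) * Rd x)%R.

Let mP : measurable_fun setT P. Proof. by case: dP. Qed.
Let mQ : measurable_fun setT Q. Proof. by case: dQ. Qed.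
Let mR : measurable_fun setT Rd. Proof. by case: dR. Qed.
Let P0 x : (0 <= P x)%R. Proof. by case: dP. Qed.
Let Q0 x : (0 <= Q x)%R. Proof. by case: dQ. Qed.
Let R0 x : (0 <= Rd x)%R. Proof. by case: dR. Qed.

Let mU : measurable_fun setT u. Proof. exact: measurable_sqrt_diff2. Qed.
Let mV : measurable_fun setT v. Proof. exact: measurable_sqrt_diff2. Qed.
Let mpsi : measurable_fun setT psi.
Proof.
apply: measurable_funM => //; apply: measurable_funD; last exact: measurable_cst.
exact: measurable_tsummand.
Qed.
Let u0 x : (0 <= u x)%R. Proof. exact: sqr_ge0. Qed.
Let v0 x : (0 <= v x)%R. Proof. exact: sqr_ge0. Qed.
Let psi0 x : (0 <= psi x)%R.
Proof. by rewrite mulr_ge0//; have /andP[] := tsummand_bounds P0 Q0 x; lra. Qed.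

Lemma contrast_integral_lb (beta : R) : (0 < beta)%R ->
  (((1 - beta) * hellinger2 mu Q Rd - (2 + beta^-1) * hellinger2 mu P Rd + 1)%:E
    <= \int[mu]_x ((tsummand P Q x + 1) * Rd x)%:E).
Proof.
move=> beta0.
pose PR x := (2^-1 * P x + 1 * Rd x)%R.
pose UV x := ((1 + beta^-1 / 2) * u x + beta / 2 * v x)%R.
pose QUV x := (2^-1 * Q x + 1 * UV x)%R.
have mPR : measurable_fun setT PR by exact: measurable_comb.
have mUV : measurable_fun setT UV by exact: measurable_comb.
have mQUV : measurable_fun setT QUV by exact: measurable_comb.
have h0 : (0 <= 2^-1 :> R)%R by rewrite invr_ge0.
have b0 : (0 <= beta / 2)%R by rewrite divr_ge0// ltW.
have K0 : (0 <= 1 + beta^-1 / 2)%R by rewrite addr_ge0// divr_ge0// invr_ge0 ltW.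
have PR0 x : (0 <= PR x)%R by rewrite addr_ge0// mulr_ge0.
have UV0 x : (0 <= UV x)%R by rewrite addr_ge0// mulr_ge0.
have QUV0 x : (0 <= QUV x)%R by rewrite addr_ge0// mulr_ge0.
have ineq : \int[mu]_x ((2^-1 * v x + 1 * PR x)%:E) <=
            \int[mu]_x ((1 * psi x + 1 * QUV x)%:E).
  apply: ge0_le_integral => //.
  - by move=> x _; rewrite lee_fin addr_ge0// mulr_ge0.
  - by apply/measurable_EFinP; exact: measurable_comb.
  - by apply/measurable_EFinP; exact: measurable_comb.
  move=> x _; rewrite lee_fin /PR /QUV /UV /psi /u /v.
  have := contrast_pointwise beta0 (P0 x) (Q0 x) (R0 x); rewrite tsummandE; lra.
rewrite ge0_integral_comb// /PR ge0_integral_comb// in ineq.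
rewrite ge0_integral_comb// /QUV ge0_integral_comb// /UV ge0_integral_comb// in ineq.
have [_ _ IP] := dP; have [_ _ IQ] := dQ; have [_ _ IR] := dR.
rewrite /u /v !integral_hellinger2// IP IQ IR in ineq.
rewrite -!EFinM -!EFinD -leeBlDr// -EFinB mul1e in ineq.
by apply: le_trans ineq; rewrite lee_fin; lra.
Qed.

End contrast_integral.

Lemma expectation_add1 d (Omega : measurableType d) (R : realType)
  (Pr : probability Omega R) (f : Omega -> R) :
  measurable_fun setT f -> (forall w, `|f w| <= 1) ->
  (\int[Pr]_w (f w)%:E + 1 = \int[Pr]_w (f w + 1)%:E)%E.
Proof.
move=> mf f1.
have int1 := @finite_measure_integrable_cst _ _ _ Pr setT (1 : R) measurableT.
have intf : Pr.-integrable setT (EFin \o f).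
  apply: le_integrable int1 => //; first exact/measurable_EFinP.
  by move=> w _ /=; rewrite normr1 lee_fin.
have E1 : (\int[Pr]_w (cst 1) w = 1)%E.
  by rewrite integral_cst//= mul1e probability_setT.
by rewrite -[X in (_ + X)%E]E1 -integralD_EFin.
Qed.

(* Only the
   marginal laws of the X_i matter (linearity of expectation): shifted by 1,
   it is the integral of (tsummand + 1) * Rd against mu. *)
Lemma expectation_test_stat d (T : measurableType d) (R : realType)
  (mu : {measure set T -> \bar R}) (P Q Rd : T -> R) (n : nat)
  d' (Omega : measurableType d') (Pr : probability Omega R)
  (X : 'I_n -> Omega -> T) : (0 < n)%N ->
  measurable_fun setT P -> measurable_fun setT Q ->
  (forall x, 0 <= P x) -> (forall x, 0 <= Q x) ->
  measurable_fun setT Rd -> (forall x, 0 <= Rd x) ->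
  (forall i, measurable_fun setT (X i)) ->
  (forall i A, measurable A ->
     Pr (X i @^-1` A) = (\int[mu]_(x in A) (Rd x)%:E)%E) ->
  (\int[Pr]_w (test_stat P Q (fun i => X i w))%:E + 1
   = \int[mu]_x ((tsummand P Q x + 1) * Rd x)%:E)%E.
Proof.
move=> n0 mP mQ P0 Q0 mR R0 mX lawX.
pose psi x := tsummand P Q x + 1.
pose Tst w := test_stat P Q (fun i => X i w).
have mpsi : measurable_fun setT psi.
  by apply: measurable_funD; [exact: measurable_tsummand | exact: measurable_cst].
have psi0 x : 0 <= psi x by have /andP[] := tsummand_bounds P0 Q0 x; rewrite /psi; lra.
have marginal i : (\int[Pr]_w (psi (X i w))%:E
                   = \int[mu]_x ((tsummand P Q x + 1) * Rd x)%:E)%E.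
  rewrite (integral_law_density R0 mR (mX i) (lawX i) (f := EFin \o psi))//.
  exact/measurable_EFinP.
have mT : measurable_fun setT Tst.
  apply: measurable_funM; first exact: measurable_cst.
  apply: measurable_sum => i; apply: measurableT_comp => //.
  exact: measurable_tsummand.
rewrite expectation_add1 //; last by move=> w; exact: test_stat_bounded.
transitivity (\int[Pr]_w (n%:R^-1 * \sum_(i < n) psi (X i w))%:E)%E.
  by apply: eq_integral => w _; rewrite /Tst test_stat_shiftE.
under [LHS]eq_integral do rewrite EFinM -sumEFin.
rewrite ge0_integralZl_EFin// ?invr_ge0//; last 2 first.
- by move=> w _; rewrite sume_ge0// => i _; rewrite lee_fin.
- apply: emeasurable_sum => i; apply/measurable_EFinP.
  exact: measurableT_comp.
rewrite ge0_integral_sum//; last 2 first.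
- move=> i; apply/measurable_EFinP; exact: measurableT_comp.
- by move=> i w _; rewrite lee_fin.
under eq_bigr do rewrite marginal.
set J := (\int[mu]_x _)%E.
have -> : \sum_(i < n) J = (n%:R%:E * J)%E by rewrite mule_natl sumr_const card_ord.
by rewrite muleA -EFinM mulVf ?mul1e// pnatr_eq0 -lt0n.
Qed.

Unset Implicit Arguments.

Theorem lemma4 (R : realType) (d : measure_display) (T : measurableType d)
  (mu : {measure set T -> \bar R}) (P Q Rd : T -> R) (alpha : R) :
  sigma_finite setT mu ->
  is_density mu P -> is_density mu Q -> is_density mu Rd ->
  (Num.sqrt 2)^-1 < alpha -> alpha < 1 ->
  Num.sqrt 2 / (Num.sqrt 2 * alpha - 1) * hellinger mu P Rd
    <= hellinger mu Q Rd ->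
  forall (n : nat), (0 < n)%N ->
  forall (d' : measure_display) (Omega : measurableType d')
    (Pr : probability Omega R) (X : 'I_n -> Omega -> T),
  iid_with_density Pr mu Rd X ->
  ((2 * (1 - alpha ^+ 2) * hellinger2 mu Q Rd)%:E
    <= \int[Pr]_w (test_stat P Q (fun i => X i w))%:E)%E.
Proof.
move=> _ dP dQ dR alpha_gt _ hH n n0 d' Omega Pr X [mX lawX _].
have [mP P0 _] := dP; have [mQ Q0 _] := dQ; have [mR R0 _] := dR.
set beta := alpha - (Num.sqrt 2)^-1.
have beta0 : 0 < beta by rewrite subr_gt0.
rewrite sqrt2_ratio -/beta in hH.
have hPQ := hellinger2_le beta0 hH.
have betaP : beta^-1 * hellinger2 mu P Rd <= beta * hellinger2 mu Q Rd.
  have binv0 : 0 <= beta^-1 by rewrite invr_ge0 ltW.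
  apply: (le_trans (ler_wpM2l binv0 hPQ)).
  by rewrite mulrA expr2 mulKf ?gt_eqF.
have const : 0 <= (1 - 2 * beta - 2 * beta ^+ 2 - 2 * (1 - alpha ^+ 2))
                  * hellinger2 mu Q Rd.
  rewrite mulr_ge0 ?hellinger2_ge0// subr_ge0.
  exact: sqrt2_constant (ltW alpha_gt).
rewrite -(@leeD2rE R 1%E)// (expectation_test_stat n0 mP mQ P0 Q0 mR R0 mX lawX).
apply: le_trans (contrast_integral_lb dP dQ dR beta0).
by rewrite -EFinD lee_fin lerD2r; nra.
Qed.
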